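(* Let $E$ be a realizable matrix and let $A$ be a $(0,1)$ matrix such that $A$ and $A+E$ are Gram mates. Then for every $\mathbf x\in\mathrm{Row}(E)$ we have $A\mathbf x\in\mathrm{Col}(E)$, and for every $\mathbf y\in\mathrm{Col}(E)$ we have $A^T\mathbf y\in\mathrm{Row}(E)$.
   Context: Two $(0,1)$ matrices $A,B$ are Gram mates if $AA^T=BB^T$, $A^TA=B^TB$ and $A\neq B$. A $(0,1,-1)$ matrix $E$ with $E\mathbf 1=0$ and $\mathbf 1^TE=0^T$ is realizable if there is a $(0,1)$ matrix $A$ such that $A$ and $A+E$ are Gram mates. $\mathrm{Row}(E)$, $\mathrm{Col}(E)$ denote the row space and column space of $E$ (as subspaces of the appropriate $\mathbb R^n$, $\mathbb R^m$). *)

From mathcomp Require Import all_boot all_order all_algebra.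
From mathcomp Require Import reals.
Set Implicit Arguments. Unset Strict Implicit. Unset Printing Implicit Defensive.
Import GRing.Theory Num.Theory.
Local Open Scope ring_scope.

Definition is01 (R : realType) m n (A : 'M[R]_(m, n)) : Prop :=
  forall i j, A i j = 0 \/ A i j = 1.

Definition is01m1 (R : realType) m n (E : 'M[R]_(m, n)) : Prop :=
  forall i j, E i j = 0 \/ E i j = 1 \/ E i j = -1.

Definition gram_mates (R : realType) m n (A B : 'M[R]_(m, n)) : Prop :=
  [/\ is01 A, is01 B, A *m A^T = B *m B^T, A^T *m A = B^T *m B & A <> B].

Definition zero_line_sums (R : realType) m n (E : 'M[R]_(m, n)) : Prop :=
  E *m const_mx 1 = 0 :> 'cV_m /\ const_mx 1 *m E = 0 :> 'rV_n.

Definition realizable (R : realType) m n (E : 'M[R]_(m, n)) : Prop :=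
  [/\ is01m1 E, zero_line_sums E &
      exists A : 'M[R]_(m, n), is01 A /\ gram_mates A (A + E)].

Definition in_row_space (R : realType) m n (E : 'M[R]_(m, n)) (x : 'cV[R]_n) : bool :=
  (x^T <= E)%MS.
Definition in_col_space (R : realType) m n (E : 'M[R]_(m, n)) (y : 'cV[R]_m) : bool :=
  (y^T <= E^T)%MS.

From mathcomp Require Import all_boot all_order all_algebra.
From mathcomp Require Import reals.
Set Implicit Arguments. Unset Strict Implicit. Unset Printing Implicit Defensive.
Local Open Scope ring_scope.
Import GRing.Theory.

(* Write B = A + E.  Expanding B B^T = A A^T gives E A^T = - B E^T, so if
   x^T = D E then (A x)^T = x^T A^T = D E A^T = - D B E^T lies in the row
   space of E^T, i.e. A x lies in Col(E).  The dual statement follows in the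
   same way from A^T A = B^T B.  Neither realizability nor the 0/1 entries
   are needed: only the two Gram identities are used. *)

Lemma gram_shift_mulmx_tr (R : pzRingType) m n (A E : 'M[R]_(m, n)) :
  A *m A^T = (A + E) *m (A + E)^T -> E *m A^T = - ((A + E) *m E^T).
Proof.
move=> gramA; apply/eqP; rewrite -subr_eq0 opprK.
have -> : E *m A^T + (A + E) *m E^T = (A + E) *m (A + E)^T - A *m A^T.
  rewrite linearD /= !mulmxDl !mulmxDr.
  by rewrite [RHS]addrC !addrA addNr add0r [E *m A^T + _]addrC.
by rewrite -gramA subrr.
Qed.

Lemma gram_shift_submx_tr (F : fieldType) m n p (A E : 'M[F]_(m, n))
    (u : 'M[F]_(p, n)) :
  A *m A^T = (A + E) *m (A + E)^T -> (u <= E)%MS -> (u *m A^T <= E^T)%MS.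
Proof.
move=> gramA uE; apply: submx_trans (submxMr _ uE) _.
by rewrite (gram_shift_mulmx_tr gramA) eqmx_opp submxMl.
Qed.

Theorem proposition3p3 (R : realType) (m n : nat) (E A : 'M[R]_(m, n)) :
  realizable E -> is01 A -> gram_mates A (A + E) ->
  (forall x : 'cV[R]_n, in_row_space E x -> in_col_space E (A *m x)) /\
  (forall y : 'cV[R]_m, in_col_space E y -> in_row_space E (A^T *m y)).
Proof.
move=> _ _ [_ _ gramA_rows gramA_cols _].
have gramAt : A^T *m A^T^T = (A^T + E^T) *m (A^T + E^T)^T.
  by rewrite -linearD /= !trmxK.
split=> [x | y]; rewrite /in_row_space /in_col_space trmx_mul => xyE.
- exact: gram_shift_submx_tr.
- by rewrite -[E in (_ <= E)%MS]trmxK; apply: gram_shift_submx_tr.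
Qed.
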